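(* Let $Y$ be a Banach space with norm $\|\cdot\|_{y}$, $X\subset Y$ a non-empty set and $\mathcal{T}:X\rightarrow X$ a given operator. Define $X_{\infty}\subset Y$ as the set of all $U\in Y$ for which there exist a sequence $\{U^{k}\}\subset X$ and $V\in Y$ such that $U^{k}\rightarrow U$ and $\mathcal{T}(U^{k})\rightarrow V$ in $Y$. Assume: (i) $\mathcal{T}$ admits a well-defined extension $\widehat{\mathcal{T}}:X_{\infty}\rightarrow Y$ given by $\widehat{\mathcal{T}}(U)=V$, where $V$ is the limit in $Y$ of $\mathcal{T}(U^{k})$ for a sequence $\{U^{k}\}\subset X$ with $U^{k}\rightarrow U$ in $Y$; that is, $V$ is independent of the sequence in $X$ converging to $U$; (ii) there is a constant $0<\alpha_{0}<\frac{1}{2}$ such that for all $U_{1},U_{2}\in X$, $$\|\mathcal{T}^{2}(U_{2})-\mathcal{T}^{2}(U_{1})\|_{y}\leq\alpha_{0}\left\{\|\mathcal{T}(U_{2})-\mathcal{T}(U_{1})\|_{y}+\|U_{2}-U_{1}\|_{y}\right\}.$$ Then $\widehat{\mathcal{T}}(X_{\infty})\subseteq X_{\infty}$, $\widehat{\mathcal{T}}$ satisfies the inequality in (ii) for all $U_{1},U_{2}\in X_{\infty}$, and there is a unique $U_{\infty}\in X_{\infty}$ with $\widehat{\mathcal{T}}(U_{\infty})=U_{\infty}$.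
   Context: This is an abstract metric fixed point theorem; the iteration inequality of type $a_{k}\leq\alpha_{0}(a_{k-1}+a_{k-2})$ with $0<\alpha_{0}<1/2$ implies $\sum_{k}a_{k}<\infty$. *)

From HB Require Import structures.
From mathcomp Require Import all_boot all_order all_algebra.
From mathcomp Require Import all_classical all_reals all_analysis.
Set Implicit Arguments. Unset Strict Implicit. Unset Printing Implicit Defensive.
Import Order.TTheory GRing.Theory Num.Theory.
Import numFieldNormedType.Exports.
Local Open Scope classical_set_scope.
Local Open Scope ring_scope.

Definition ext_rel {R : realType} {Y : completeNormedModType R}
  (X : set Y) (T : Y -> Y) (U V : Y) : Prop :=
  exists u : nat -> Y, (forall k, X (u k)) /\ u @ \oo --> U /\
                        (fun k => T (u k)) @ \oo --> V.

Definition X_infty {R : realType} {Y : completeNormedModType R}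
  (X : set Y) (T : Y -> Y) : set Y :=
  [set U | exists V, ext_rel X T U V].

(* The orbit x_n = T^n x0 has increments a_n = |x_(n+1) - x_n| obeying
   a_(n+2) <= alpha (a_(n+1) + a_n); since r = 1/2 + alpha < 1 satisfies
   alpha (r + 1) <= r^2, they decay like r^n, so the orbit is Cauchy and its
   limit l satisfies ext_rel l l, i.e. That l = l.  For U in X_infty
   approximated by u_k in X, inequality (ii) makes T (T u_k) Cauchy, so
   That U is again in X_infty and (ii) passes to That in the limit; for two
   fixed points it reads |U - W| <= 2 alpha |U - W|, whence uniqueness. *)

From HB Require Import structures.
From mathcomp Require Import all_boot all_order all_algebra.
From mathcomp Require Import all_classical all_reals all_analysis.
From mathcomp Require Import ring lra.
Set Implicit Arguments. Unset Strict Implicit. Unset Printing Implicit Defensive.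
Import Order.TTheory GRing.Theory Num.Theory.
Import numFieldNormedType.Exports.
Local Open Scope classical_set_scope.
Local Open Scope ring_scope.

Lemma cvgn_of_dominated_increments (R : realType) (Y : completeNormedModType R)
    (u v w : nat -> Y) (c : R) : 0 <= c -> cvgn u -> cvgn v ->
  (forall n m, `|w n - w m| <= c * (`|v n - v m| + `|u n - u m|)) ->
  cvgn w.
Proof.
move=> c_ge0 /cvg_cauchy/cauchy_ballP Cu /cvg_cauchy/cauchy_ballP Cv w_le.
apply/cauchy_cvgP/cauchy_ballP => e e_gt0.
set d := e / (2 * (c + 1)).
have d_gt0 : 0 < d by rewrite divr_gt0 // mulr_gt0 // ltr_wpDl.
have cd_lt : c * (d + d) < e.
  have -> : e = (d + d) * (c + 1).
    by rewrite /d; field; rewrite gt_eqF ?ltr_wpDl.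
  by nra.
move: (Cu _ d_gt0) (Cv _ d_gt0); rewrite !near_simpl.
apply: filterS2 => -[n m] /=.
rewrite -!ball_normE /= => unm vnm.
apply: le_lt_trans (w_le n m) (le_lt_trans _ cd_lt).
by rewrite ler_wpM2l // lerD // ltW // distrC.
Qed.

Section TwoStepRecurrence.
Variables (R : realType) (a : nat -> R) (alpha : R).
Hypotheses (a_ge0 : forall n, 0 <= a n) (alpha_ge0 : 0 <= alpha)
  (a_rec : forall n, a n.+2 <= alpha * (a n.+1 + a n)).

Lemma two_step_geometric_bound (r : R) : 0 < r -> alpha * (r + 1) <= r ^+ 2 ->
  forall n, a n <= (a 0%N + a 1%N / r) * r ^+ n.
Proof.
move=> r_gt0 r_root; set M := _ + _.
have M_ge0 : 0 <= M by rewrite /M addr_ge0 ?divr_ge0 // ltW.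
suff bound2 : forall n, a n <= M * r ^+ n /\ a n.+1 <= M * r ^+ n.+1.
  by move=> n; case: (bound2 n).
elim=> [|n [IHn IHn1]].
  rewrite mulr1 mulrDl mulfVK ?gt_eqF // lerDl lerDr.
  by rewrite divr_ge0 ?mulr_ge0 // ltW.
split=> //; apply: le_trans (a_rec n) _.
apply: le_trans (ler_wpM2l alpha_ge0 (lerD IHn1 IHn)) _.
have -> : alpha * (M * r ^+ n.+1 + M * r ^+ n) = alpha * (r + 1) * (M * r ^+ n).
  by rewrite exprS; ring.
have -> : M * r ^+ n.+2 = r ^+ 2 * (M * r ^+ n) by rewrite !exprS; ring.
by apply: ler_wpM2r; rewrite // mulr_ge0 // exprn_ge0 // ltW.
Qed.

Lemma two_step_summable : alpha < 1 / 2 -> cvgn (series a).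
Proof.
move=> alpha_lt; pose r := 1 / 2 + alpha.
have r_gt0 : 0 < r by rewrite /r ltr_wpDr.
have r_root : alpha * (r + 1) <= r ^+ 2.
  have -> : r ^+ 2 = alpha * (r + 1) + (1 / 4 - alpha / 2) by rewrite /r; field.
  by rewrite lerDl; lra.
apply: (@series_le_cvg _ _ (geometric (a 0%N + a 1%N / r) r) a_ge0).
- by move=> n; rewrite /= mulr_ge0 ?exprn_ge0 ?addr_ge0 ?divr_ge0 // ltW.
- exact: two_step_geometric_bound.
- by apply: is_cvg_geometric_series; rewrite gtr0_norm // /r; lra.
Qed.

End TwoStepRecurrence.

Lemma cvgn_of_summable_increments (R : realType) (V : completeNormedModType R)
    (x : nat -> V) :
  cvgn (series (fun n => `|x n.+1 - x n|)) -> cvgn x.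
Proof.
move=> /(@normed_cvg _ _ (telescope x)) telescope_cvg.
have -> : x = (fun n => x 0%N + series (telescope x) n).
  by apply: funext => n; rewrite eq_sum_telescope.
exact: is_cvgD (is_cvg_cst _) telescope_cvg.
Qed.

Section ExtendedOperator.
Variables (R : realType) (Y : completeNormedModType R) (X : set Y)
  (T That : Y -> Y) (alpha : R).
Hypotheses (T_stable : forall U, X U -> X (T U))
  (ext_rel_functional :
     forall U V1 V2, ext_rel X T U V1 -> ext_rel X T U V2 -> V1 = V2)
  (alpha_ge0 : 0 <= alpha)
  (T_contract2 : forall U1 U2, X U1 -> X U2 ->
     `|T (T U2) - T (T U1)| <= alpha * (`|T U2 - T U1| + `|U2 - U1|))
  (That_ext : forall U, X_infty X T U -> ext_rel X T U (That U)).

Lemma X_infty_That_approx U : X_infty X T U ->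
  exists2 u : nat -> Y, forall k, X (u k) &
    [/\ u @ \oo --> U, (fun k => T (u k)) @ \oo --> That U
      & (fun k => T (T (u k))) @ \oo --> That (That U)].
Proof.
move=> /That_ext [u [Xu [u_cvg Tu_cvg]]].
have TTu_cvg : cvgn (fun k => T (T (u k))).
  apply: (cvgn_of_dominated_increments (v := fun k => T (u k)) alpha_ge0).
  - exact: cvgP u_cvg.
  - exact: cvgP Tu_cvg.
  - by move=> n m; apply: T_contract2.
have ext_That : ext_rel X T (That U) (limn (fun k => T (T (u k)))).
  by exists (fun k => T (u k)); split=> // k; apply: T_stable.
have X_That : X_infty X T (That U) by exists (limn (fun k => T (T (u k)))).
exists u => //; split=> //.
by rewrite (ext_rel_functional (That_ext X_That) ext_That).
Qed.

Lemma X_infty_That U : X_infty X T U -> X_infty X T (That U).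
Proof.
move=> /X_infty_That_approx [u Xu [_ Tu_cvg TTu_cvg]].
by exists (That (That U)), (fun k => T (u k)); split=> // k; apply: T_stable.
Qed.

Lemma That_contract2 U1 U2 : X_infty X T U1 -> X_infty X T U2 ->
  `|That (That U2) - That (That U1)|
    <= alpha * (`|That U2 - That U1| + `|U2 - U1|).
Proof.
move=> /X_infty_That_approx [u1 Xu1 [u1_cvg Tu1_cvg TTu1_cvg]].
move=> /X_infty_That_approx [u2 Xu2 [u2_cvg Tu2_cvg TTu2_cvg]].
have dist_cvg (v1 v2 : nat -> Y) (l1 l2 : Y) :
    v1 @ \oo --> l1 -> v2 @ \oo --> l2 ->
    (fun k => `|v2 k - v1 k|) @ \oo --> `|l2 - l1|.
  by move=> v1_cvg v2_cvg; apply: cvg_norm; apply: cvgB.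
apply: (ler_cvg_to (dist_cvg _ _ _ _ TTu1_cvg TTu2_cvg)
  (cvgMl_tmp (cvgD (dist_cvg _ _ _ _ Tu1_cvg Tu2_cvg)
                   (dist_cvg _ _ _ _ u1_cvg u2_cvg)))).
by near=> k; apply: T_contract2.
Unshelve. all: end_near.
Qed.

Lemma That_fixed_point_unique U1 U2 : alpha < 1 / 2 ->
  X_infty X T U1 -> X_infty X T U2 -> That U1 = U1 -> That U2 = U2 -> U2 = U1.
Proof.
move=> alpha_lt XU1 XU2 fix1 fix2.
have := That_contract2 XU1 XU2; rewrite !fix1 !fix2 => dist_le.
have : `|U2 - U1| <= 0 by have := normr_ge0 (U2 - U1); nra.
by rewrite normr_le0 subr_eq0 => /eqP.
Qed.

Lemma That_has_fixed_point : X !=set0 -> alpha < 1 / 2 ->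
  exists2 l, X_infty X T l & That l = l.
Proof.
move=> [x0 Xx0] alpha_lt; pose x n := iter n T x0.
have Xx n : X (x n) by elim: n => //= n; apply: T_stable.
have x_cvg : cvgn x.
  apply: cvgn_of_summable_increments.
  apply: (two_step_summable _ alpha_ge0 _ alpha_lt) => n.
    exact: normr_ge0.
  exact: T_contract2 _ _ (Xx n) (Xx n.+1).
have Tx_cvg : (fun k => T (x k)) @ \oo --> limn x by rewrite (cvg_shiftS x).
have ext_l : ext_rel X T (limn x) (limn x) by exists x.
have Xl : X_infty X T (limn x) by exists (limn x).
by exists (limn x) => //; exact: ext_rel_functional (That_ext Xl) ext_l.
Qed.

End ExtendedOperator.

Theorem theorem5p1 (R : realType) (Y : completeNormedModType R)
  (X : set Y) (T : Y -> Y) (alpha0 : R) (That : Y -> Y) :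
  X !=set0 ->
  (forall U, X U -> X (T U)) ->
  (* (i) the extension is well defined *)
  (forall U V1 V2, ext_rel X T U V1 -> ext_rel X T U V2 -> V1 = V2) ->
  (* (ii) *)
  0 < alpha0 -> alpha0 < 1 / 2 ->
  (forall U1 U2, X U1 -> X U2 ->
     `|T (T U2) - T (T U1)| <= alpha0 * (`|T U2 - T U1| + `|U2 - U1|)) ->
  (* That is the extension of T to X_infty *)
  (forall U, X_infty X T U -> ext_rel X T U (That U)) ->
  [/\ (forall U, X_infty X T U -> X_infty X T (That U)),
      (forall U1 U2, X_infty X T U1 -> X_infty X T U2 ->
         `|That (That U2) - That (That U1)|
           <= alpha0 * (`|That U2 - That U1| + `|U2 - U1|))
    & exists Uinf, [/\ X_infty X T Uinf, That Uinf = Uinf &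
         forall W, X_infty X T W -> That W = W -> W = Uinf]].
Proof.
move=> Xne T_stable functional alpha_gt0 alpha_lt T_contract2 That_ext.
have alpha_ge0 := ltW alpha_gt0.
split.
- exact: X_infty_That T_stable functional alpha_ge0 T_contract2 That_ext.
- exact: That_contract2 T_stable functional alpha_ge0 T_contract2 That_ext.
- have [l Xl l_fixed] := That_has_fixed_point T_stable functional alpha_ge0
    T_contract2 That_ext Xne alpha_lt.
  exists l; split=> // W XW W_fixed.
  exact: (That_fixed_point_unique T_stable functional alpha_ge0 T_contract2
    That_ext alpha_lt Xl XW l_fixed W_fixed).
Qed.
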